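(* If $\mathcal U\in\mathcal M_*$ and $\mathcal V\in\mathcal M_{\le\omega}$, then $\mathcal U\cdot\mathcal V:=\{(AC,D)\mid A\in\mathcal U,\ (C,D)\in\mathcal V\}$ belongs to $\mathcal M_{\le\omega}$ (i.e. is a closed subset of $\mathcal C$).
   Context: $\Sigma$ is a finite alphabet, $\Sigma^{\le\omega}=\Sigma^*\cup\Sigma^\omega$; concatenation $w\cdot u$ equals $wu$ if $w$ is finite and $w$ if $w$ is infinite, extended pointwise to languages. For $A\subseteq\Sigma^*$, $A^\omega$ is the set of all words $w_0w_1w_2\cdots$ with $w_i\in A$, and $CD^\omega$ means $C\cdot D^\omega$. Fix an extended Büchi automaton $\mathfrak A=(Q,\Sigma,\delta,q_0,F)$ (finite states, $\delta:Q\times\Sigma\to\mathcal P(Q)$, initial $q_0$, final $F$). For $w\in\Sigma^*$ write $p\overset{w}{\leadsto}q$ if $q$ is reachable from $p$ reading $w$, and $p\overset{w}{\leadsto}_F q$ if there are $q''\in F$, $w=uv$ with $p\overset{u}{\leadsto}q''\overset{v}{\leadsto}q$. For $w,u\in\Sigma^+$, $w\sim u$ iff for all $p,q$: $p\overset{w}{\leadsto}q\Leftrightarrow p\overset{u}{\leadsto}q$ and $p\overset{w}{\leadsto}_Fq\Leftrightarrow p\overset{u}{\leadsto}_Fq$. $\mathcal Q=\Sigma^+/{\sim}\uplus\{[\epsilon]\}$ with $[\epsilon]=\{\epsilon\}$; concatenation of classes is well defined (monoid with unit $[\epsilon]$). Let $\mathcal C=\{(C,D)\mid C,D\in\mathcal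 Q,\ CD=C,\ DD=D\}$. Define $\mathfrak f(V)=\{(C,D)\in\mathcal C\mid CD^\omega\cap V\neq\emptyset\}$ and $\mathfrak g(\mathcal V)=\bigcup_{(C,D)\in\mathcal V}CD^\omega$. $\mathcal V\subseteq\mathcal C$ is closed if $\mathfrak f(\mathfrak g(\mathcal V))=\mathcal V$, i.e. whenever $(C,D)\in\mathcal V$, $(U,V)\in\mathcal C$ and $UV^\omega\cap CD^\omega\ne\emptyset$ then $(U,V)\in\mathcal V$; closure $\mathfrak c(\mathcal V)=\bigcup_{n\ge1}(\mathfrak f\circ\mathfrak g)^n(\mathcal V)$. $\mathcal M_{\le\omega}=\{\mathfrak c(\mathfrak f(V))\mid V\subseteq\Sigma^{\le\omega}\}$ (equivalently the closed subsets of $\mathcal C$) and $\mathcal M_*=\mathcal P(\mathcal Q)$. *)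

From mathcomp Require Import all_boot.
Set Implicit Arguments. Unset Strict Implicit. Unset Printing Implicit Defensive.

(* Extended Buchi automaton (Q, Sigma, delta, q0, F) over alphabet S. *)
Record aut (S : finType) := Aut {
  st : finType;
  delta : st -> S -> {set st};
  init : st;
  fin : {set st} }.

Section Defs.
Variables (S : finType) (A : aut S).

Inductive oword := Fin of seq S | Inf of (nat -> S).

Fixpoint reach (p : st A) (w : seq S) : {set st A} :=
  match w with
  | [::] => [set p]
  | a :: w' => \bigcup_(q in delta p a) reach q w'
  end.

Definition reachb (p : st A) (w : seq S) (q : st A) : bool := q \in reach p w.

Definition reachFb (p : st A) (w : seq S) (q : st A) : bool :=
  [exists i : 'I_(size w).+1, [exists q2 : st A,
     [&& q2 \in fin A, reachb p (take i w) q2 & reachb q2 (drop i w) q]]].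

Definition sim (w u : seq S) : Prop :=
  w <> [::] /\ u <> [::] /\
  forall p q : st A, (reachb p w q = reachb p u q) /\ (reachFb p w q = reachFb p u q).

Definition lang := seq S -> Prop.

Definition cls (w : seq S) : lang :=
  fun u => if w is [::] then u = [::] else sim w u.

Definition isClass (C : lang) : Prop := exists w, C = cls w.

Definition cmul (C D : lang) : lang :=
  fun x => exists u v, C u /\ D v /\ cls (u ++ v) x.

(* x is the (infinite) concatenation f 0 f 1 f 2 ... *)
Definition concat_rel (f : nat -> seq S) (x : oword) : Prop :=
  match x with
  | Fin w => exists N, (forall i, N <= i -> f i = [::]) /\ w = flatten (mkseq f N)
  | Inf g => forall n, exists k,
      n < size (flatten (mkseq f k)) /\ g n = nth (g n) (flatten (mkseq f k)) n
  end.

Definition omega (L : lang) (x : oword) : Prop :=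
  exists f, (forall i, L (f i)) /\ concat_rel f x.

Definition pcat (u : seq S) (x : oword) : oword :=
  match x with
  | Fin v => Fin (u ++ v)
  | Inf h => Inf (fun n => nth (h (n - size u)) u n)
  end.

Definition omega_cat (C D : lang) (x : oword) : Prop :=
  exists u y, C u /\ omega D y /\ x = pcat u y.

Definition inC (p : lang * lang) : Prop :=
  isClass p.1 /\ isClass p.2 /\ cmul p.1 p.2 = p.1 /\ cmul p.2 p.2 = p.2.

Definition ff (V : oword -> Prop) : lang * lang -> Prop :=
  fun p => inC p /\ exists x, V x /\ omega_cat p.1 p.2 x.

Definition gg (VV : lang * lang -> Prop) : oword -> Prop :=
  fun x => exists p, VV p /\ omega_cat p.1 p.2 x.

Definition closed (VV : lang * lang -> Prop) : Prop :=
  forall p, ff (gg VV) p <-> VV p.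

Definition M_le_omega (VV : lang * lang -> Prop) : Prop := closed VV.

Definition M_star (UU : lang -> Prop) : Prop := forall C, UU C -> isClass C.

Definition setmul (UU : lang -> Prop) (VV : lang * lang -> Prop) : lang * lang -> Prop :=
  fun p => exists a c, UU a /\ VV (c, p.2) /\ p.1 = cmul a c.

End Defs.

From mathcomp Require Import all_boot.
From Stdlib Require Import FunctionalExtensionality PropExtensionality.
From mathcomp Require Import zify.
Set Implicit Arguments. Unset Strict Implicit.

(* Two words are ~-equivalent iff they have the same "profile": the same
   emptiness and the same relations p ~w~> q and p ~w~>_F q.  The profile of a
   concatenation uv is determined by the profiles of u and v, so ~ is a
   congruence and [u][v] = [uv]; this is the algebraic part of the file.

   The combinatorial part is a resynchronisation lemma: if u.y = v.(f0 f1 ...)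
   is one infinite word, then y = (s f_k).(f_{k+1} f_{k+2} ...) where
   u s = v f0 ... f_{k-1}.  Finite words in D^omega only occur for D = [eps].

   For the theorem, a pair (C,D) of the closure of U.V has a word x in
   C D^omega and in (A C') P^omega with A in U and (C',P) in V.  After
   resynchronising, the part of x behind its A-prefix lies in C' P^omega and in
   C3 D^omega for a class C3 with A C3 = C, so the closedness of V puts (C3,D)
   in V and (C,D) = (A C3, D) is in U.V.  The converse inclusion is direct. *)

Section Profiles.
Variables (S : finType) (A : aut S).

Lemma reach_cat (p : st A) u v r :
  reachb p (u ++ v) r = [exists q, reachb p u q && reachb q v r].
Proof.
elim: u p => [|a u IH] p /=.
  apply/idP/existsP => [H|[q /andP[]]].
    by exists p; rewrite /reachb /= in_set1 eqxx.
  by rewrite /reachb /= in_set1 => /eqP ->.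
rewrite /reachb /=; apply/bigcupP/existsP.
  move=> [q Hq]; rewrite -/(reachb q (u ++ v) r) IH => /existsP [q' /andP[H1 H2]].
  by exists q'; apply/andP; split=> //; apply/bigcupP; exists q.
move=> [q' /andP[/bigcupP [q Hq H1] H2]]; exists q => //.
by rewrite -/(reachb q (u ++ v) r) IH; apply/existsP; exists q'; rewrite /reachb H1.
Qed.

Lemma reachFP (p : st A) w q :
  reachFb p w q <-> exists w1 w2, w = w1 ++ w2 /\
    exists2 q2, q2 \in fin A & reachb p w1 q2 && reachb q2 w2 q.
Proof.
split.
  move=> /existsP [i /existsP [q2 /and3P [H1 H2 H3]]].
  exists (take i w), (drop i w); split; first by rewrite cat_take_drop.
  by exists q2; rewrite ?H2.
move=> [w1 [w2 [-> [q2 H1 /andP [H2 H3]]]]]; apply/existsP.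
have Hi : size w1 < (size (w1 ++ w2)).+1 by rewrite size_cat ltnS leq_addr.
exists (Ordinal Hi); apply/existsP; exists q2.
by rewrite /= take_size_cat // drop_size_cat // H1 H2.
Qed.

Lemma cat_eq_cat (u v w1 w2 : seq S) : u ++ v = w1 ++ w2 ->
  exists m, (u = w1 ++ m /\ w2 = m ++ v) \/ (w1 = u ++ m /\ v = m ++ w2).
Proof.
elim: u w1 => [|a u IH] w1 /=; first by move=> ->; exists w1; right.
case: w1 => [|b w1] /=; first by move=> <-; exists (a :: u); left.
by move=> [-> /IH [m [[-> ->]|[-> ->]]]]; exists m; [left|right].
Qed.

Lemma reachF_cat (p : st A) u v r :
  reachFb p (u ++ v) r =
    [exists q, reachFb p u q && reachb q v r] ||
    [exists q, reachb p u q && reachFb q v r].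
Proof.
apply/idP/idP.
  move=> /reachFP [w1 [w2 [/cat_eq_cat [m [[-> ->]|[-> ->]]] [q2 F /andP[H1 H2]]]]].
    move: H2; rewrite reach_cat => /existsP [q /andP [H2 H3]].
    apply/orP; left; apply/existsP; exists q; rewrite H3 andbT.
    by apply/reachFP; exists w1, m; split=> //; exists q2; rewrite ?H1.
  move: H1; rewrite reach_cat => /existsP [q /andP [H1 H3]].
  apply/orP; right; apply/existsP; exists q; rewrite H1 /=.
  by apply/reachFP; exists m, w2; split=> //; exists q2; rewrite ?H3.
case/orP => /existsP [q /andP [H1 H2]].
  move/reachFP: H1 => [w1 [w2 [-> [q2 F /andP [H3 H4]]]]].
  apply/reachFP; exists w1, (w2 ++ v); split; first by rewrite catA.
  by exists q2; rewrite // H3 reach_cat; apply/existsP; exists q; rewrite H4.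
move/reachFP: H2 => [w1 [w2 [-> [q2 F /andP [H3 H4]]]]].
apply/reachFP; exists (u ++ w1), w2; split; first by rewrite catA.
by exists q2; rewrite // H4 reach_cat andbT; apply/existsP; exists q; rewrite H1.
Qed.

(* Same profile: the invariant that defines the classes of Q, including [eps]. *)
Definition same_profile (w x : seq S) :=
  ((w == [::]) = (x == [::])) /\
  forall p q : st A, reachb p w q = reachb p x q /\ reachFb p w q = reachFb p x q.

Lemma clsP w x : cls A w x <-> same_profile w x.
Proof.
case: w => [|a w] /=; first by split=> [->|[/esym/eqP]].
split=> [[_ [Hx H]]|[Hx H]]; first by split=> //; case: x Hx {H}.
by split=> //; split=> //; case: x Hx {H}.
Qed.

Lemma same_profile_sym w x : same_profile w x -> same_profile x w.
Proof. by move=> [H1 H2]; split=> // p q; case: (H2 p q). Qed.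

Lemma same_profile_trans w x y :
  same_profile w x -> same_profile x y -> same_profile w y.
Proof.
move=> [H1 H2] [H3 H4]; split; first by rewrite H1.
by move=> p q; case: (H2 p q) => -> ->; exact: H4.
Qed.

Lemma same_profile_cat u u' v v' :
  same_profile u u' -> same_profile v v' -> same_profile (u ++ v) (u' ++ v').
Proof.
move=> [E1 H1] [E2 H2]; split; first by case: u u' E1 {H1} => [|? ?] [|? ?].
move=> p r; split.
  rewrite !reach_cat; apply: eq_existsb => q.
  by case: (H1 p q) => -> _; case: (H2 q r) => -> _.
rewrite !reachF_cat; congr orb; apply: eq_existsb => q.
  by case: (H1 p q) => _ ->; case: (H2 q r) => -> _.
by case: (H1 p q) => -> _; case: (H2 q r) => _ ->.
Qed.

Lemma cls_refl w : cls A w w.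
Proof. exact/clsP. Qed.

Lemma cls_eq w x : cls A w x -> cls A w = cls A x.
Proof.
move/clsP=> H; apply: functional_extensionality => y.
apply: propositional_extensionality; rewrite !clsP; split.
  exact: same_profile_trans (same_profile_sym H).
exact: same_profile_trans H.
Qed.

Lemma class_eq C w : isClass A C -> C w -> C = cls A w.
Proof. by move=> [c ->] /cls_eq. Qed.

Lemma cmul_cls u v : cmul A (cls A u) (cls A v) = cls A (u ++ v).
Proof.
apply: functional_extensionality => x; apply: propositional_extensionality; split.
  move=> [u' [v' [/clsP H1 [/clsP H2 /clsP H3]]]].
  exact/clsP/(same_profile_trans (same_profile_cat H1 H2) H3).
by move=> H; exists u, v; split; [exact: cls_refl | split; first exact: cls_refl].
Qed.

Lemma cmulA C D E : isClass A C -> isClass A D -> isClass A E ->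
  cmul A (cmul A C D) E = cmul A C (cmul A D E).
Proof. by move=> [c ->] [d ->] [e ->]; rewrite !cmul_cls catA. Qed.

Lemma cmul_class C D : isClass A C -> isClass A D -> isClass A (cmul A C D).
Proof. by move=> [c ->] [d ->]; rewrite cmul_cls; exists (c ++ d). Qed.

Lemma cmul_idem_right w f :
  cmul A (cls A f) (cls A f) = cls A f ->
  cmul A (cls A (w ++ f)) (cls A f) = cls A (w ++ f).
Proof.
by move=> Hff; rewrite cmul_cls -catA -(cmul_cls w) -(cmul_cls f f) Hff cmul_cls.
Qed.

Lemma cls_absorb C D v (f : nat -> seq S) :
  C = cls A v -> cmul A C D = C -> (forall i, D = cls A (f i)) ->
  forall m, cls A (v ++ flatten (mkseq f m)) = C.
Proof.
move=> -> HCD HD; elim=> [|m IH]; first by rewrite cats0.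
rewrite -addn1 /mkseq iotaD map_cat flatten_cat /= cats0 catA.
by rewrite -cmul_cls IH -HD.
Qed.

End Profiles.

Section OmegaWords.
Variables (S : finType) (A : aut S).

Lemma flatten_mkseqD (f : nat -> seq S) k m : flatten (mkseq f (k + m)) =
  flatten (mkseq f k) ++ flatten (mkseq (fun i => f (k + i)) m).
Proof.
rewrite /mkseq iotaD map_cat flatten_cat add0n; congr (_ ++ _).
by rewrite -[in iota k m](addn0 k) iotaDl -map_comp.
Qed.

Lemma flatten_mkseqS (f : nat -> seq S) k :
  flatten (mkseq f k.+1) = flatten (mkseq f k) ++ f k.
Proof. by rewrite -addn1 flatten_mkseqD /= addn0 cats0. Qed.

Lemma concat_nth (f : nat -> seq S) h : concat_rel f (Inf h) ->
  forall k n d, n < size (flatten (mkseq f k)) -> h n = nth d (flatten (mkseq f k)) n.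
Proof.
move=> Hc k n d Hn; case: (Hc n) => k' [Hn' ->].
rewrite (set_nth_default d) //.
case: (leqP k k') => Hkk.
  by rewrite -(subnKC Hkk) flatten_mkseqD nth_cat Hn.
by rewrite -(subnKC (ltnW Hkk)) flatten_mkseqD nth_cat Hn'.
Qed.

Lemma concat_tail (f : nat -> seq S) h K : concat_rel f (Inf h) ->
  concat_rel (fun i => f (K + i)) (Inf (fun n => h (size (flatten (mkseq f K)) + n))).
Proof.
move=> Hc n /=; set s := size (flatten (mkseq f K)).
case: (Hc (s + n)) => k [Hk _]; exists k.
have Hlt : s + n < size (flatten (mkseq f (K + k))).
  by apply: leq_trans Hk _; rewrite addnC flatten_mkseqD size_cat leq_addr.
have Hlt' := Hlt; rewrite flatten_mkseqD size_cat ltn_add2l in Hlt'; split => //.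
rewrite (concat_nth Hc (h (s + n)) Hlt) flatten_mkseqD nth_cat ltnNge leq_addr /= addKn.
exact: set_nth_default.
Qed.

Lemma pcat_nth (u : seq S) h g : pcat u (Inf h) = Inf g ->
  forall d n, g n = if n < size u then nth d u n else h (n - size u).
Proof.
move=> [<-] d n /=; case: ifP => H; first exact: set_nth_default.
by rewrite nth_default // leqNgt H.
Qed.

Lemma pcat_cat (u s : seq S) t : pcat u (pcat s (Inf t)) = pcat (u ++ s) (Inf t).
Proof.
congr Inf; apply: functional_extensionality => n.
rewrite nth_cat size_cat; case: ifP => H; first exact: set_nth_default.
by rewrite nth_default ?subnDA // leqNgt H.
Qed.

Lemma resync (u v : seq S) hy h2 g f :
  pcat u (Inf hy) = Inf g -> pcat v (Inf h2) = Inf g -> concat_rel f (Inf h2) ->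
  exists k s0, u ++ s0 = v ++ flatten (mkseq f k) /\
     Inf hy = pcat (s0 ++ f k) (Inf (fun n => h2 (size (flatten (mkseq f k.+1)) + n))).
Proof.
move=> Hu Hv Hc; set d := g 0.
case: (Hc (size u)) => k [Hk _].
have g_prefix m n : n < size (v ++ flatten (mkseq f m)) ->
    g n = nth d (v ++ flatten (mkseq f m)) n.
  rewrite (pcat_nth Hv d) nth_cat size_cat => Hn; case: ifP => // Hnv.
  by apply: (concat_nth Hc); lia.
have Hus : size u <= size (v ++ flatten (mkseq f k)) by rewrite size_cat; lia.
set s0 := drop (size u) (v ++ flatten (mkseq f k)).
have Es0 : u ++ s0 = v ++ flatten (mkseq f k).
  suff <- : take (size u) (v ++ flatten (mkseq f k)) = u by rewrite cat_take_drop.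
  apply: (@eq_from_nth _ d); first by rewrite size_takel.
  move=> i; rewrite size_takel // => Hi.
  by rewrite nth_take // -g_prefix ?(pcat_nth Hu d) ?Hi //; lia.
exists k, s0; split => //.
set P := flatten (mkseq f k.+1).
have Es : u ++ (s0 ++ f k) = v ++ P by rewrite catA Es0 /P flatten_mkseqS catA.
have Hsz : size u + size (s0 ++ f k) = size v + size P by rewrite -!size_cat Es.
congr Inf; apply: functional_extensionality => n.
have -> : hy n = g (size u + n) by rewrite (pcat_nth Hu d) ltnNge leq_addr /= addKn.
case: (ltnP n (size (s0 ++ f k))) => Hn.
  rewrite (g_prefix k.+1) -/P; last by rewrite size_cat; lia.
  by rewrite -Es nth_cat ltnNge leq_addr /= addKn; exact: set_nth_default.
rewrite nth_default // (pcat_nth Hv d) ifF; last by apply/negbTE; rewrite -leqNgt; lia.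
by congr h2; lia.
Qed.

Lemma omega_Fin D w : isClass A D -> omega D (Fin w) -> D = cls A [::] /\ w = [::].
Proof.
move=> HD [f [Hf [N [HN ->]]]].
have ED : D = cls A [::] by apply: class_eq => //; rewrite -(HN N (leqnn N)).
split => //; rewrite /mkseq; elim: (iota 0 N) => //= i s ->.
by have := Hf i; rewrite ED => ->.
Qed.

End OmegaWords.

Section Closure.
Variables (S : finType) (A : aut S).
Variables (UU : lang S -> Prop) (VV : lang S * lang S -> Prop).
Hypothesis HU : M_star A UU.
Hypothesis HV : M_le_omega A VV.

Lemma closed_mem p x :
  inC A p -> omega_cat p.1 p.2 x -> gg VV x -> VV p.
Proof. by move=> Hp Hx HxV; apply/HV; split=> //; exists x. Qed.

Lemma shift_into_closed c P D u y w f z :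
  VV (c, P) -> c u -> omega P y ->
  D = cls A f -> cmul A D D = D -> omega D z ->
  pcat u y = pcat (w ++ f) z -> VV (cls A (w ++ f), D).
Proof.
move=> HcP Hu Hy -> Hff Hz Ex; apply: (@closed_mem _ (pcat u y)).
- split; first by exists (w ++ f).
  by split; [exists f | split=> //; exact: cmul_idem_right].
- by exists (w ++ f), z; rewrite Ex; split=> //; exact: cls_refl.
- by exists (c, P); split=> //; exists u, y.
Qed.

(* The case of an infinite witness x = u.y = v.z with u in A C', y in P^omega,
   v in C and z in D^omega: resynchronising z against u produces the class C3
   of the overview, which lies in VV by shift_into_closed. *)
Lemma setmul_of_Inf_witness C D a c P u hy v h2 :
  isClass A C -> isClass A D -> cmul A C D = C -> cmul A D D = D ->
  UU a -> VV (c, P) -> cmul A a c u -> omega P (Inf hy) ->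
  C v -> omega D (Inf h2) -> pcat u (Inf hy) = pcat v (Inf h2) ->
  setmul A UU VV (C, D).
Proof.
move=> HC HD HCD HDD Ha HcP [u0 [u1 [Hu0 [Hu1 Hu]]]] Hy Hv [f [Hf Hcf]] Ex.
have EDf i : D = cls A (f i) by apply: class_eq.
have [k [s0 [Es0 Ey]]] := resync (erefl _) (esym Ex) Hcf.
set w := u1 ++ s0.
have HVC3 : VV (cls A (w ++ f k), D).
  apply: (shift_into_closed HcP Hu1 Hy (EDf k) HDD); last by rewrite Ey pcat_cat catA.
  by exists (fun i => f (k.+1 + i)); split; [move=> i; exact: Hf | exact: concat_tail].
exists a, (cls A (w ++ f k)); split=> //; split=> //=.
rewrite (class_eq (HU Ha) Hu0) cmul_cls /w !catA.
rewrite -(cmul_cls A (_ ++ s0)) -(cmul_cls A (u0 ++ u1)) (cls_eq Hu) !cmul_cls.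
by rewrite Es0 -catA -flatten_mkseqS (cls_absorb (class_eq HC Hv) HCD EDf).
Qed.

Lemma setmul_of_closure p : ff A (gg (setmul A UU VV)) p -> setmul A UU VV p.
Proof.
case: p => C D [[HC [HD [HCD HDD]]] /= [x [[[P1 P] [HP1P HxP]] HxC]]].
move: HP1P HxP HxC => [a [c [Ha [HcP /= E1]]]] /= [u [y [Hu [Hy ->]]]] [v [z [Hv [Hz Ex]]]].
rewrite {}E1 in Hu; rewrite /= in HC HD HCD HDD.
have [[Hc [HP _]] _] := proj2 (HV (c, P)) HcP.
case: y z Hy Hz Ex => [wy|hy] [wz|hz] Hy Hz //=.
- have [EP ->] := omega_Fin HP Hy; have [ED ->] := omega_Fin HD Hz.
  rewrite !cats0 => -[Euv].
  exists a, c; split=> //; split; first by rewrite ED -EP.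
  rewrite /= (class_eq HC Hv) -Euv.
  by rewrite (class_eq (cmul_class (HU Ha) Hc) Hu).
- by move=> Ex; apply: setmul_of_Inf_witness Ha HcP Hu Hy Hv Hz Ex.
Qed.

Lemma closure_of_setmul p : setmul A UU VV p -> ff A (gg (setmul A UU VV)) p.
Proof.
case: p => C D Hp; move: (Hp) => [a [c [Ha [HcD /= EC]]]].
have [[Hc [HD [HcDc HDD]]] [_ [_ [u [y [Hu [Hy _]]]]]]] := proj2 (HV (c, D)) HcD.
rewrite /= in Hc HD HcDc HDD Hu.
have [a0 Ea] := HU Ha.
have Hau : C (a0 ++ u).
  by rewrite EC Ea (class_eq Hc Hu) cmul_cls; exact: cls_refl.
split.
  split; first by rewrite EC; exact: cmul_class (HU Ha) Hc.
  by split=> //; split=> //; rewrite EC cmulA ?HcDc //; exact: HU.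
exists (pcat (a0 ++ u) y); split; last by exists (a0 ++ u), y.
by exists (C, D); split=> //; exists (a0 ++ u), y.
Qed.

End Closure.

Theorem lemma10 (S : finType) (A : aut S)
  (UU : lang S -> Prop) (VV : lang S * lang S -> Prop) :
  M_star A UU -> M_le_omega A VV -> M_le_omega A (setmul A UU VV).
Proof.
move=> HU HV p; split; [exact: setmul_of_closure | exact: closure_of_setmul].
Qed.
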